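(* Let $k>0$, $N\in\mathbb{N}^+$, $h=\frac1{N+1}$, and let $\mathcal{A}_h$ be the matrix defined below. Then for every such $h\in(0,1)$, $i\mathbb{R}\subset\rho(\mathcal{A}_h)$, i.e. $\mathcal{A}_h$ has no purely imaginary eigenvalues.
   Context: Let $D_h$ be the $(N+1)\times(N+1)$ lower bidiagonal matrix with $\frac12$ on the diagonal and first subdiagonal, and $M_h$ the $(N+1)\times(N+1)$ upper bidiagonal matrix with $-\frac1h$ on the diagonal and $\frac1h$ on the first superdiagonal; $e_{N+1}=(0,\dots,0,1)^\top$. For $Y_h=(y_1,\dots,y_{N+1})^\top\in\mathbb{C}^{N+1}$ let $Z_h$ solve $D_h^\top Z_h=-M_h^\top Y_h+\tfrac{ik}2y_{N+1}e_{N+1}$ and set $\mathcal{A}_hY_h=D_h^{-1}[-iM_hZ_h-\tfrac kh y_{N+1}e_{N+1}]$. This is the order-reduction semi-discretization of $w_t=-iw_{xx}$, $w(0,t)=0$, $w_x(1,t)=-ikw(1,t)$. $\rho(\cdot)$ denotes the resolvent set. *)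

(* complex matrices over R[i], R an arbitrary real closed field
   (e.g. the real numbers). *)
From HB Require Import structures.
From mathcomp Require Import all_boot all_order all_algebra.
From mathcomp Require Import complex.

Import Order.TTheory GRing.Theory Num.Theory.
Local Open Scope ring_scope.
Local Open Scope complex_scope.

Section OrderReduction.
Context {R : rcfType}.
Local Notation C := R[i].

Definition meshh (N : nat) : R := (N.+1%:R)^-1.

Definition Dh (N : nat) : 'M[C]_(N.+1) :=
  \matrix_(i, j) (if (i == j) || (val i == (val j).+1) then (2^-1 : R)%:C else 0).

Definition Mh (N : nat) : 'M[C]_(N.+1) :=
  \matrix_(i, j) (if i == j then (- (meshh N)^-1)%:C
                  else if val j == (val i).+1 then ((meshh N)^-1)%:C else 0).

(* E Y = y_{N+1} e_{N+1} *)
Definition Elast (N : nat) : 'M[C]_(N.+1) := delta_mx ord_max ord_max.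

Definition Zh (k : R) (N : nat) (Y : 'cV[C]_(N.+1)) : 'cV[C]_(N.+1) :=
  invmx (Dh N)^T *m (- ((Mh N)^T *m Y) + ('i * (k / 2)%:C) *: (Elast N *m Y)).

Definition Ah_apply (k : R) (N : nat) (Y : 'cV[C]_(N.+1)) : 'cV[C]_(N.+1) :=
  invmx (Dh N) *m (- ('i *: (Mh N *m Zh k N Y)) - (k / meshh N)%:C *: (Elast N *m Y)).

Definition Ah (k : R) (N : nat) : 'M[C]_(N.+1) :=
  \matrix_(i, j) Ah_apply k N (delta_mx j 0) i 0.

Definition resolvent_set {n : nat} (A : 'M[C]_n) : pred C :=
  fun lam => (lam%:M - A) \in unitmx.

End OrderReduction.

From HB Require Import structures.
From mathcomp Require Import all_boot all_order all_algebra.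
From mathcomp Require Import complex ring lra.
Import Order.TTheory GRing.Theory Num.Theory.
Local Open Scope ring_scope.
Local Open Scope complex_scope.

(** Let A_h Y = iω Y, write y_m and z_m (0 <= m <= N) for the entries of Y and
   Z_h Y, and set y_{-1} = 0, z_{N+1} = 0, H = 1/h.  Multiplying the m-th row
   of the eigenvalue equation by the conjugate of (y_m + y_{m-1})/2, the fluxes
   conj(y_{m-1}) z_m telescope and leave the discrete energy identity
     iω Σ |(y_m + y_{m-1})/2|^2 = i H^2 Σ |y_m - y_{m-1}|^2 - k H |y_N|^2.
   Its real part gives y_N = 0 and its imaginary part ω Σ |ȳ_m|^2 = H^2 Σ |Δy_m|^2.
   For ω < 0 all jumps vanish, so Y = 0 since y_{-1} = 0.  For ω >= 0, rows m+1
   of both equations recover y_m from (y_{m+1}, z_{m+2}) through the nonzero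
   factor i(ω/2 + 2H^2), and the backward recursion from y_N = z_{N+1} = 0
   gives Y = 0. *)

Section ColumnSequence.
Context {K : pzRingType}.

Definition colseq {n} (Y : 'cV[K]_n) (m : nat) : K :=
  if insub m is Some i then Y i 0 else 0.

Definition lag (f : nat -> K) (m : nat) : K := if m is m'.+1 then f m' else 0.

Lemma colseq_ord n (Y : 'cV[K]_n) (i : 'I_n) : colseq Y i = Y i 0.
Proof. by rewrite /colseq valK. Qed.

Lemma colseq_out {n} (Y : 'cV[K]_n) {m} : (n <= m)%N -> colseq Y m = 0.
Proof. by move=> le_nm; rewrite /colseq insubF // ltnNge le_nm. Qed.

Lemma colseqD n (Y1 Y2 : 'cV[K]_n) m : colseq (Y1 + Y2) m = colseq Y1 m + colseq Y2 m.
Proof. by rewrite /colseq; case: insub => [i|]; rewrite ?mxE ?addr0. Qed.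

Lemma colseqN n (Y : 'cV[K]_n) m : colseq (- Y) m = - colseq Y m.
Proof. by rewrite /colseq; case: insub => [i|]; rewrite ?mxE ?oppr0. Qed.

Lemma colseqZ n c (Y : 'cV[K]_n) m : colseq (c *: Y) m = c * colseq Y m.
Proof. by rewrite /colseq; case: insub => [i|]; rewrite ?mxE ?mulr0. Qed.

Lemma colseq_mulmx n p (A : 'M[K]_(n, p)) (Y : 'cV[K]_p) m (lt_mn : (m < n)%N) :
  colseq (A *m Y) m = \sum_j A (Ordinal lt_mn) j * Y j 0.
Proof. by rewrite -[m]/(val (Ordinal lt_mn)) colseq_ord mxE. Qed.

Lemma sum_colseq n (Y : 'cV[K]_n) m (c : K) :
  \sum_(j < n) (if val j == m then c * Y j 0 else 0) = c * colseq Y m.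
Proof.
rewrite /colseq; case: insubP => [i _ <-|out_m].
  rewrite (bigD1 i) //= eqxx big1 ?addr0 // => j.
  by case: ifP => // /eqP/val_inj ->; rewrite eqxx.
rewrite mulr0 big1 // => j _; case: eqP => // jm.
by case/negP: out_m; rewrite -jm ltn_ord.
Qed.

Lemma sum_lag_colseq n (Y : 'cV[K]_n) m (c : K) :
  \sum_(j < n) (if m == (val j).+1 then c * Y j 0 else 0) = c * lag (colseq Y) m.
Proof.
case: m => [|m]; first by rewrite mulr0 big1.
by rewrite -sum_colseq; apply: eq_bigr => j _; rewrite eqSS eq_sym.
Qed.

Lemma colseq_eq0 n (Y : 'cV[K]_n) : (forall m, (m < n)%N -> colseq Y m = 0) -> Y = 0.
Proof.
move=> Y0; apply/matrixP => i j; rewrite (ord1 j) !mxE -colseq_ord.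
exact: Y0.
Qed.

Definition bidiag {n} (a b : K) : 'M[K]_n :=
  \matrix_(i, j) if i == j then a else if val j == (val i).+1 then b else 0.

Lemma colseq_bidiag_mul n a b (Y : 'cV[K]_n) m : (m < n)%N ->
  colseq (bidiag a b *m Y) m = a * colseq Y m + b * colseq Y m.+1.
Proof.
move=> lt_mn; rewrite colseq_mulmx -!sum_colseq -big_split; apply: eq_bigr => j _.
rewrite mxE /=; have [<-|ne] := eqVneq (Ordinal lt_mn) j.
  by rewrite eqxx ltn_eqF // addr0.
have /negPf -> : val j != m by rewrite eq_sym.
by rewrite add0r; case: ifP => _; rewrite ?mul0r.
Qed.

Lemma colseq_bidiag_tr_mul n a b (Y : 'cV[K]_n) m : (m < n)%N ->
  colseq ((bidiag a b)^T *m Y) m = a * colseq Y m + b * lag (colseq Y) m.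
Proof.
move=> lt_mn; rewrite colseq_mulmx -sum_colseq -sum_lag_colseq -big_split.
apply: eq_bigr => j _; rewrite !mxE /=; have [->|ne] := eqVneq j (Ordinal lt_mn).
  by rewrite eqxx (ltn_eqF (ltnSn m)) addr0.
have /negPf -> : val j != m by [].
by rewrite add0r; case: ifP => _; rewrite ?mul0r.
Qed.

Lemma colseq_delta_mul n (p q : 'I_n) (Y : 'cV[K]_n) m :
  colseq (delta_mx p q *m Y) m = if m == p then Y q 0 else 0.
Proof.
have [lt_mn|le_nm] := ltnP m n; last first.
  by rewrite colseq_out // ifF //; apply: contraTF le_nm => /eqP ->; rewrite -ltnNge.
rewrite colseq_mulmx (bigD1 q) //= big1 => [|j /negPf nej]; last by rewrite !mxE nej andbF mul0r.
by rewrite !mxE eqxx andbT addr0 -[_ == p]/(m == p); case: (m == p); rewrite ?mul1r ?mul0r.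
Qed.

End ColumnSequence.

Section DiscreteScheme.
Variable R : rcfType.
Local Notation C := R[i].

Lemma real_i_mul_eq (a b : C) : a \is Num.real -> b \is Num.real ->
  'i * a = b -> a = 0 /\ b = 0.
Proof.
move=> /complex_realP[{}a ->] /complex_realP[{}b ->] [re_eq im_eq].
by split; congr (_%:C); lra.
Qed.

(* Rows m = 0..N of D_h^T Z = -M_h^T Y + (ik/2) y_N e and iω D_h Y = -i M_h Z - (k/h) y_N e,
   where e is the last unit vector and H = 1/h. *)
Variables (N : nat) (H k om : R) (y z : nat -> C).
Hypothesis scheme_Z : forall m, (m <= N)%N ->
  (z m + z m.+1) / 2 =
  H%:C * (y m - lag y m) + (if m == N then 'i * k%:C / 2 * y N else 0).
Hypothesis scheme_Y : forall m, (m <= N)%N ->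
  'i * om%:C * (y m + lag y m) / 2 =
  'i * H%:C * (z m - z m.+1) - (if m == N then k%:C * H%:C * y N else 0).
Hypothesis z_last : z N.+1 = 0.

Let flux m := (lag y m)^* * z m.

Lemma energy_cell m : (m <= N)%N ->
  'i * om%:C * `|(y m + lag y m) / 2| ^+ 2 =
  'i * H%:C * (flux m - flux m.+1) + 'i * H%:C ^+ 2 * `|y m - lag y m| ^+ 2
  - (if m == N then k%:C * H%:C * `|y N| ^+ 2 else 0).
Proof.
move=> le_mN; have hZ := scheme_Z m le_mN; have hY := scheme_Y m le_mN.
have zS_eq : z m.+1 = 2 * ((z m + z m.+1) / 2) - z m by field.
rewrite hZ in zS_eq.
rewrite !sqr_normc /flux /= [LHS]mulrA [in LHS]mulrA hY zS_eq.
rewrite !(rmorphM, rmorphD, rmorphB, rmorphN, fmorphV, rmorph1, conjc_real).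
have ii : 'i * 'i = -1 :> C by rewrite -expr2 sqr_i.
by case: eqP => [->|_]; field: ii.
Qed.

Lemma energy :
  'i * om%:C * \sum_(0 <= m < N.+1) `|(y m + lag y m) / 2| ^+ 2 =
  'i * H%:C ^+ 2 * \sum_(0 <= m < N.+1) `|y m - lag y m| ^+ 2
  - k%:C * H%:C * `|y N| ^+ 2.
Proof.
have flux_tele : \sum_(0 <= m < N.+1) (flux m - flux m.+1) = 0.
  rewrite (eq_bigr (fun m => - (flux m.+1 - flux m))) => [|m _]; last by rewrite opprB.
  by rewrite sumrN telescope_sumr // /flux /= z_last rmorph0 mulr0 mul0r subr0 oppr0.
have boundary_term (X : C) : \sum_(0 <= m < N.+1) (if m == N then X else 0) = X.
  rewrite big_nat_recr //= eqxx big_nat big1 ?add0r // => m /andP[_ lt_mN].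
  by rewrite ltn_eqF.
rewrite mulr_sumr (eq_big_nat _ _ (fun m (le : (0 <= m < N.+1)%N) => energy_cell m le)).
by rewrite sumrB big_split /= boundary_term -!mulr_sumr flux_tele mulr0 add0r.
Qed.

Hypotheses (H_gt0 : 0 < H) (k_gt0 : 0 < k).

Lemma energy_balance :
  y N = 0 /\
  (om%:C * \sum_(0 <= m < N.+1) `|(y m + lag y m) / 2| ^+ 2 =
   H%:C ^+ 2 * \sum_(0 <= m < N.+1) `|y m - lag y m| ^+ 2).
Proof.
have energy_eq := energy.
set P := \sum_(0 <= m < N.+1) _ in energy_eq *.
set Q := \sum_(0 <= m < N.+1) _ in energy_eq *.
have realC (a : R) : a%:C \is Num.real by apply/complex_realP; exists a.
have sqr_norm_real (x : C) : `|x| ^+ 2 \is Num.real by rewrite realX ?normr_real.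
have [P_real Q_real] : P \is Num.real /\ Q \is Num.real.
  by split; apply: rpred_sum => m _.
have [balance dissipation] :
    om%:C * P - H%:C ^+ 2 * Q = 0 /\ - (k%:C * H%:C * `|y N| ^+ 2) = 0.
  apply: real_i_mul_eq.
  - by apply: realB; apply: realM => //; apply: realX.
  - by rewrite realN; apply: realM => //; apply: realM.
  - by rewrite mulrBr mulrA energy_eq; ring.
split; last by apply/eqP; rewrite -subr_eq0 balance.
move/eqP: dissipation.
rewrite oppr_eq0 mulf_eq0 mulf_eq0 !fmorph_eq0 (gt_eqF k_gt0) (gt_eqF H_gt0).
by rewrite sqrf_eq0 normr_eq0 => /eqP.
Qed.

Lemma scheme_eq0_of_lt0 : om < 0 -> forall m, (m <= N)%N -> y m = 0.
Proof.
move=> om_lt0; have [_ balance] := energy_balance.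
have sqr_ge0 (x : C) : 0 <= `|x| ^+ 2 by rewrite exprn_ge0.
have jumps0 : \sum_(0 <= m < N.+1) `|y m - lag y m| ^+ 2 = 0.
  apply/le_anti; rewrite sumr_ge0 // andbT.
  have H2_gt0 : 0 < H%:C ^+ 2.
    by rewrite exprn_gt0 // lt0r ler0c fmorph_eq0 (gt_eqF H_gt0) ltW.
  rewrite -(pmulr_rle0 _ H2_gt0) -balance -oppr_ge0 -mulNr -rmorphN.
  by rewrite mulr_ge0 ?sumr_ge0 // ler0c oppr_ge0 ltW.
have y_lag m : (m <= N)%N -> y m = lag y m.
  move=> le_mN; apply/eqP; rewrite -subr_eq0 -normr_eq0 -sqrf_eq0.
  move/eqP: jumps0; rewrite psumr_eq0 // => /allP; apply.
  by rewrite mem_iota.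
by elim=> [|m IH] le_mN; rewrite y_lag //; apply/IH/ltnW.
Qed.

Lemma scheme_backward_step m : 0 <= om -> (m < N)%N ->
  y m.+1 = 0 -> z m.+2 = 0 -> y m = 0 /\ z m.+1 = 0.
Proof.
move=> om_ge0 lt_mN ym1 zm2; have [yN0 _] := energy_balance.
have := scheme_Y m.+1 lt_mN; have := scheme_Z m.+1 lt_mN.
rewrite /= ym1 zm2 yN0 !mulr0 !if_same !addr0 !add0r !subr0 ?sub0r => hZ hY.
have zm1 : z m.+1 = - (2 * H%:C * y m).
  by rewrite -[z m.+1](@divfK _ 2) ?pnatr_eq0 // hZ; ring.
have key : 'i * ((om / 2 + 2 * H ^+ 2)%:C * y m) =
    'i * om%:C * y m / 2 - 'i * H%:C * z m.+1.
  by rewrite zm1 !(rmorphD, rmorphM, rmorphXn, fmorphV, rmorph_nat); field.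
rewrite hY subrr in key.
suff ym0 : y m = 0 by rewrite zm1 ym0 mulr0 oppr0.
move/eqP: key; rewrite !mulf_eq0 fmorph_eq0 eq_complex /= oner_eq0 andbF /=.
have /gt_eqF -> : 0 < om / 2 + 2 * H ^+ 2 by have := exprn_gt0 2 H_gt0; lra.
by move/eqP.
Qed.

Lemma scheme_eq0_of_ge0 : 0 <= om -> forall m, (m <= N)%N -> y m = 0.
Proof.
move=> om_ge0; have [yN0 _] := energy_balance.
have from_top j : (j <= N)%N -> y (N - j) = 0 /\ z (N - j).+1 = 0.
  elim: j => [|j IH] le_jN; first by rewrite subn0.
  have lt_mN : (N - j.+1 < N)%N by rewrite ltn_subrL (leq_trans _ le_jN).
  have [] := IH (ltnW le_jN); rewrite -(subnSK le_jN).
  exact: scheme_backward_step.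
by move=> m le_mN; have [] := from_top (N - m)%N (leq_subr _ _); rewrite subKn.
Qed.

Lemma scheme_eq0 m : (m <= N)%N -> y m = 0.
Proof.
by case: (ltP om 0) => [/scheme_eq0_of_lt0|/scheme_eq0_of_ge0]; apply.
Qed.

End DiscreteScheme.

Lemma unitmx_of_ker0 (F : fieldType) n (A : 'M[F]_n) :
  (forall Y : 'cV_n, A *m Y = 0 -> Y = 0) -> A \in unitmx.
Proof.
move=> ker0; rewrite unitmxE unitfE -det_tr.
apply/negP => /det0P[v /eqP nz_v v_ker].
have /ker0 vT0 : A *m v^T = 0 by rewrite -[A]trmxK -trmx_mul v_ker trmx0.
by apply: nz_v; rewrite -[v]trmxK vT0 trmx0.
Qed.

Section OrderReductionMatrices.
Variable R : rcfType.
Local Notation C := R[i].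
Variable N : nat.

Lemma Dh_bidiag : Dh N = (bidiag (2^-1 : R)%:C (2^-1 : R)%:C)^T :> 'M[C]_N.+1.
Proof.
apply/matrixP => i j; rewrite !mxE eq_sym.
by case: eqP => //=; case: eqP.
Qed.

Lemma Mh_bidiag : Mh N = bidiag (- (meshh N)^-1)%:C ((meshh N)^-1)%:C :> 'M[C]_N.+1.
Proof. by []. Qed.

Lemma Dh_unitmx : Dh (R := R) N \in unitmx.
Proof.
rewrite Dh_bidiag unitmxE unitfE det_trig; last first.
  apply/is_trig_mxP => i j lt_ij; rewrite !mxE -val_eqE (gtn_eqF lt_ij) ifF //.
  exact: ltn_eqF (ltn_trans lt_ij (ltnSn j)).
rewrite prodf_seq_neq0; apply/allP => i _ /=.
by rewrite !mxE eqxx fmorph_eq0 invr_eq0 pnatr_eq0.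
Qed.

Variable k : R.

Lemma Ah_mulmx (Y : 'cV[C]_N.+1) : Ah k N *m Y = Ah_apply k N Y.
Proof.
pose B := invmx (Dh N) *m (- ('i *: (Mh N *m (invmx (Dh N)^T *m
  (- (Mh N)^T + ('i * (k / 2)%:C) *: Elast N)))) - (k / meshh N)%:C *: Elast N).
have applyE (Y' : 'cV[C]_N.+1) : Ah_apply k N Y' = B *m Y'.
  rewrite /Ah_apply /Zh /B -mulmxA; congr (_ *m _).
  by rewrite mulmxBl mulNmx -!scalemxAl -!mulmxA mulmxDl mulNmx -scalemxAl.
have -> : Ah k N = B by apply/matrixP => i j; rewrite mxE applyE -colE mxE.
by rewrite applyE.
Qed.

Lemma Ah_apply_eigen_eq0 (om : R) (Y : 'cV[C]_N.+1) :
  0 < k -> Ah_apply k N Y = om *i *: Y -> Y = 0.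
Proof.
move=> k_gt0 eigenY; set Z := Zh k N Y.
have eqZ : (Dh N)^T *m Z = - ((Mh N)^T *m Y) + ('i * (k / 2)%:C) *: (Elast N *m Y).
  by rewrite mulKVmx // unitmx_tr Dh_unitmx.
have eqY : om *i *: (Dh N *m Y) =
    - ('i *: (Mh N *m Z)) - (k / meshh N)%:C *: (Elast N *m Y).
  by rewrite scalemxAr -eigenY /Ah_apply mulKVmx // Dh_unitmx.
have H_gt0 : 0 < (meshh (R := R) N)^-1 by rewrite !invr_gt0 ltr0n.
have last_entry (X : 'cV[C]_N.+1) m :
  colseq (Elast N *m X) m = if m == N then colseq X N else 0.
  by rewrite colseq_delta_mul -[X _ 0]colseq_ord.
have omiE : om *i = 'i * om%:C by simpc.
apply: colseq_eq0 => m lt_mN.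
apply: (@scheme_eq0 R N _ k om (colseq Y) (colseq Z) _ _ (colseq_out Z (leqnn _))
  H_gt0 k_gt0 m lt_mN).
- move=> j le_jN; have := congr1 (colseq ^~ j) eqZ.
  rewrite !(colseqD, colseqN, colseqZ) Dh_bidiag trmxK Mh_bidiag colseq_bidiag_mul //.
  rewrite colseq_bidiag_tr_mul // last_entry !(rmorphN, rmorphM, fmorphV, rmorph_nat) => h.
  by apply: etrans _ (etrans h _); [ring | case: (j == N); ring].
- move=> j le_jN; have := congr1 (colseq ^~ j) eqY.
  rewrite !(colseqD, colseqN, colseqZ) Dh_bidiag Mh_bidiag colseq_bidiag_mul //.
  rewrite colseq_bidiag_tr_mul // last_entry !(rmorphN, rmorphM, fmorphV, rmorph_nat) omiE => h.
  by apply: etrans _ (etrans h _); [ring | case: (j == N); ring].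
Qed.

End OrderReductionMatrices.

Theorem lemma4 (R : rcfType) (k : R) (N : nat) :
  0 < k -> (0 < N)%N ->
  forall omega : R, (omega *i) \in resolvent_set (Ah k N).
Proof.
move=> k_gt0 _ om; rewrite unfold_in /resolvent_set /=.
apply: unitmx_of_ker0 => Y; rewrite mulmxBl mul_scalar_mx Ah_mulmx.
move/eqP; rewrite subr_eq0 => /eqP eigenY.
exact: Ah_apply_eigen_eq0 k_gt0 (esym eigenY).
Qed.
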